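(* Let $D(z)=\frac{1-\sqrt{1-4z^2}}{2z^2}$, $E(z)=zD(z)=\frac{1-\sqrt{1-4z^2}}{2z}$ and $M_{up}(z,u)=\frac{uE(z)}{1-uE(z)}$. Then for every $k\ge 1$, \[ F_k(z,u)=\frac{1}{z^{k-2}}\frac{d}{dz}\left(z^{k-1}\,\frac{u\,F_{k-1}(z,u)-E(z)\,F_{k-1}(z,E(z))}{u-E(z)}\,M_{up}(z,u)\right), \] where $F_0(z,u)=1$; and for every $k\ge 0$, \[ B_k(z)=F_k(z,E(z))\,D(z). \]
   Context: A bicolored Dyck meander is a finite sequence of steps from $\{U_1,U_2,D\}$, where $U_1$ and $U_2$ raise the height by $1$ and $D$ lowers it by $1$, starting at height $0$ and never going below height $0$; its length is its number of steps. A bicolored Dyck path is a bicolored Dyck meander ending at height $0$. The weight of such a path is the product, over all its $U_2$ steps, of $m+j-1$, where that $U_2$ step is the $m$-th step of the path and the $j$-th $U_2$ step of the path ($U_1$ and $D$ steps have weight $1$). For $k\ge1$, let $f_{k,n,\ell}$ be the total weight of bicolored Dyck meanders of length $n$ with exactly $k$ steps $U_2$, whose last step is a $U_2$ step, and which end at height $\ell$; set $F_k(z,u)=\sum_{n,\ell\ge 0}f_{k,n,\ell}z^nu^\ell$. For $k\ge 0$, $B_k(z)$ is the sum over all bicolored Dyck paths with exactly $k$ steps $U_2$ of (weight)$\cdot z^{\text{length}}$. *)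

From Stdlib Require Import Reals List Arith Bool.
From Coquelicot Require Import Coquelicot.
Import ListNotations.
Open Scope R_scope.

(** Steps of a bicolored Dyck meander: U1, U2 (up, +1) and Dn (down, -1). *)
Inductive step : Type := U1 | U2 | Dn.

Fixpoint words (n : nat) : list (list step) :=
  match n with
  | O => [ [] ]
  | S m => flat_map (fun w => [U1 :: w; U2 :: w; Dn :: w]) (words m)
  end.

Fixpoint meander_from (h : nat) (p : list step) : option nat :=
  match p with
  | [] => Some h
  | U1 :: q => meander_from (S h) q
  | U2 :: q => meander_from (S h) q
  | Dn :: q => match h with O => None | S h' => meander_from h' q end
  end.

Fixpoint nU2 (p : list step) : nat :=
  match p with
  | [] => O
  | U2 :: q => S (nU2 q)
  | _ :: q => nU2 q
  end.

Definition last_is_U2 (p : list step) : bool :=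
  match rev p with U2 :: _ => true | _ => false end.

(** Weight: [wt m j p], where m is the (1-based) position of the first step
    of p in the whole path and j the number of U2 steps already seen.
    A U2 step at position m which is the (j+1)-th U2 step contributes
    m + (j+1) - 1 = m + j. *)
Fixpoint wt (m j : nat) (p : list step) : nat :=
  match p with
  | [] => 1%nat
  | U2 :: q => ((m + j) * wt (S m) (S j) q)%nat
  | _ :: q => wt (S m) j q
  end.

Definition weight (p : list step) : nat := wt 1 0 p.

Definition ends_at (p : list step) (l : nat) : bool :=
  match meander_from 0 p with Some h => Nat.eqb h l | None => false end.

Definition fcoef (k n l : nat) : nat :=
  list_sum (map (fun w =>
    if (ends_at w l && Nat.eqb (nU2 w) k && last_is_U2 w)%bool
    then weight w else 0%nat) (words n)).

Definition bcoef (k n : nat) : nat :=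
  list_sum (map (fun w =>
    if (ends_at w 0 && Nat.eqb (nU2 w) k)%bool then weight w else 0%nat) (words n)).

(** F_k(z,u) = sum_{n,l} f_{k,n,l} z^n u^l  (f_{k,n,l} = 0 for l > n),
    with the convention F_0 = 1. *)
Definition Fgf (k : nat) (z u : R) : R :=
  match k with
  | O => 1
  | S _ => Series (fun n => z ^ n * sum_f_R0 (fun l => INR (fcoef k n l) * u ^ l) n)
  end.

Definition Bgf (k : nat) (z : R) : R :=
  Series (fun n => INR (bcoef k n) * z ^ n).

Definition Dfun (z : R) : R := (1 - sqrt (1 - 4 * z ^ 2)) / (2 * z ^ 2).
Definition Efun (z : R) : R := (1 - sqrt (1 - 4 * z ^ 2)) / (2 * z).
Definition Mup (z u : R) : R := u * Efun z / (1 - u * Efun z).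

From Stdlib Require Import Reals.
From Coquelicot Require Import Coquelicot.
From Stdlib Require Import List Arith Bool Lia Lra.
Import ListNotations.
Open Scope R_scope.

(* Classify the meanders with [j] steps U2 by their last step.  With
   Q_j(z,u) the generating function of all of them, appending U1, U2 or D
   gives the kernel equation
     (u - z u^2 - z) Q_j(z,u) = u F_j(z,u) - z Q_j(z,0),
   and appending a final U2, which sits at position n + 1 and is the
   (j + 1)-th U2, gives F_{j+1} = sum_n (n + j + 1) z^(n+1) u [z^n] Q_j,
   i.e. z^(1-j) d/dz (z^(j+1) u Q_j).  The kernel vanishes at u = E(z)
   (z E^2 - E + z = 0), so z Q_j(z,0) = E F_j(z,E), which is B_j = F_j(z,E) D
   since B_j = Q_j(z,0) and D = E / z; and the kernel factors as z (u - E)(1 - u E) / E,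
   which turns u Q_j into the bracket of the first formula.  The
   coefficients are O(3^n (2n+1)^j), so everything converges for |z| < 1/3
   and |u| <= 1. *)

Fixpoint lsum {A : Type} (L : list A) (g : A -> R) : R :=
  match L with [] => 0 | x :: L' => g x + lsum L' g end.

Section ListSums.

Context {A : Type}.

Lemma lsum_app (L1 L2 : list A) g : lsum (L1 ++ L2) g = lsum L1 g + lsum L2 g.
Proof. induction L1 as [|x L1 IH]; simpl; [ring | rewrite IH; ring]. Qed.

Lemma lsum_flat_map {B : Type} (h : B -> list A) (L : list B) g :
  lsum (flat_map h L) g = lsum L (fun x => lsum (h x) g).
Proof. induction L as [|x L IH]; simpl; [reflexivity | rewrite lsum_app, IH; reflexivity]. Qed.

Lemma lsum_ext_in (L : list A) f g : (forall x, In x L -> f x = g x) -> lsum L f = lsum L g.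
Proof.
  induction L as [|x L IH]; simpl; intros H; [reflexivity|].
  rewrite H, IH by auto. reflexivity.
Qed.

Lemma lsum_const_0 (L : list A) : lsum L (fun _ => 0) = 0.
Proof. induction L as [|x L IH]; simpl; [reflexivity | rewrite IH; ring]. Qed.

Lemma lsum_ext (L : list A) f g : (forall x, f x = g x) -> lsum L f = lsum L g.
Proof. intros; apply lsum_ext_in; auto. Qed.

Lemma lsum_plus (L : list A) f g : lsum L (fun x => f x + g x) = lsum L f + lsum L g.
Proof. induction L as [|x L IH]; simpl; [ring | rewrite IH; ring]. Qed.

Lemma lsum_minus (L : list A) f g : lsum L (fun x => f x - g x) = lsum L f - lsum L g.
Proof. induction L as [|x L IH]; simpl; [ring | rewrite IH; ring]. Qed.

Lemma lsum_scal (L : list A) c f : lsum L (fun x => c * f x) = c * lsum L f.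
Proof. induction L as [|x L IH]; simpl; [ring | rewrite IH; ring]. Qed.

Lemma INR_list_sum_map (h : A -> nat) (L : list A) :
  INR (list_sum (map h L)) = lsum L (fun x => INR (h x)).
Proof. induction L as [|x L IH]; simpl; [reflexivity | rewrite plus_INR, IH; reflexivity]. Qed.

Lemma sum_f_R0_lsum (g : nat -> A -> R) (L : list A) n :
  sum_f_R0 (fun l => lsum L (g l)) n = lsum L (fun x => sum_f_R0 (fun l => g l x) n).
Proof. induction n as [|n IH]; simpl; [reflexivity | rewrite IH, <- lsum_plus; reflexivity]. Qed.

End ListSums.

Lemma words_length n w : In w (words n) -> length w = n.
Proof.
  revert w; induction n as [|n IH]; simpl; intros w H.
  - destruct H as [<- | []]; reflexivity.
  - apply in_flat_map in H as [w' [Hw' H]].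
    simpl in H; destruct H as [<- | [<- | [<- | []]]]; simpl; f_equal; auto.
Qed.

Lemma lsum_words_cons n g :
  lsum (words (S n)) g = lsum (words n) (fun w => g (U1 :: w) + g (U2 :: w) + g (Dn :: w)).
Proof. simpl words. rewrite lsum_flat_map. apply lsum_ext. intro w. simpl. ring. Qed.

Lemma lsum_words_snoc n g :
  lsum (words (S n)) g
  = lsum (words n) (fun w => g (w ++ [U1]) + g (w ++ [U2]) + g (w ++ [Dn])).
Proof.
  revert g; induction n as [|n IH]; intro g; [simpl; ring|].
  rewrite lsum_words_cons, IH, lsum_words_cons.
  apply lsum_ext. intro w. simpl. ring.
Qed.

Lemma lsum_words_abs_le n g M :
  (forall w, length w = n -> Rabs (g w) <= M) -> Rabs (lsum (words n) g) <= 3 ^ n * M.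
Proof.
  revert g M; induction n as [|n IH]; intros g M H.
  - simpl. rewrite Rplus_0_r, Rmult_1_l. apply H; reflexivity.
  - rewrite lsum_words_cons.
    replace (3 ^ S n * M) with (3 ^ n * (3 * M)) by (simpl; ring).
    apply IH. intros w Hw.
    pose proof (H (U1 :: w)) as H1; pose proof (H (U2 :: w)) as H2;
      pose proof (H (Dn :: w)) as H3; simpl in H1, H2, H3; rewrite Hw in H1, H2, H3.
    pose proof (Rabs_triang (g (U1 :: w) + g (U2 :: w)) (g (Dn :: w))).
    pose proof (Rabs_triang (g (U1 :: w)) (g (U2 :: w))).
    specialize (H1 eq_refl); specialize (H2 eq_refl); specialize (H3 eq_refl). lra.
Qed.

Lemma meander_from_app h p q :
  meander_from h (p ++ q) =
  match meander_from h p with Some h' => meander_from h' q | None => None end.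
Proof.
  revert h; induction p as [|[] p IH]; intro h; simpl; auto.
  destruct h; auto.
Qed.

Lemma meander_from_le h p h' : meander_from h p = Some h' -> (h' <= h + length p)%nat.
Proof.
  revert h; induction p as [|[] p IH]; intros h H; simpl in *.
  - injection H; lia.
  - apply IH in H; lia.
  - apply IH in H; lia.
  - destruct h; [discriminate|]. apply IH in H; lia.
Qed.

Lemma nU2_app p q : nU2 (p ++ q) = (nU2 p + nU2 q)%nat.
Proof. induction p as [|[] p IH]; simpl; auto. Qed.

Lemma wt_app m j p q :
  wt m j (p ++ q) = (wt m j p * wt (m + length p) (j + nU2 p) q)%nat.
Proof.
  revert m j; induction p as [|[] p IH]; intros m j; simpl; rewrite ?IH.
  - rewrite !Nat.add_0_r. lia.
  all: rewrite <- ?plus_n_Sm, ?Nat.mul_assoc; reflexivity.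
Qed.

Lemma wt_le m j p : (wt m j p <= (m + j + 2 * length p) ^ nU2 p)%nat.
Proof.
  revert m j; induction p as [|[] p IH]; intros m j; simpl; [lia| | |].
  - eapply Nat.le_trans; [apply IH | apply Nat.pow_le_mono_l; lia].
  - apply Nat.mul_le_mono; [lia|].
    eapply Nat.le_trans; [apply IH | apply Nat.pow_le_mono_l; lia].
  - eapply Nat.le_trans; [apply IH | apply Nat.pow_le_mono_l; lia].
Qed.

Lemma nU2_snoc w s : nU2 (w ++ [s]) = (nU2 w + match s with U2 => 1 | _ => 0 end)%nat.
Proof. rewrite nU2_app. destruct s; reflexivity. Qed.

Lemma weight_snoc w s :
  weight (w ++ [s]) = (weight w * match s with U2 => 1 + length w + nU2 w | _ => 1 end)%nat.
Proof. unfold weight. rewrite wt_app. destruct s; simpl; lia. Qed.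

Lemma last_is_U2_snoc w s : last_is_U2 (w ++ [s]) = match s with U2 => true | _ => false end.
Proof. unfold last_is_U2. rewrite rev_unit. reflexivity. Qed.

Definition hpow (u : R) (w : list step) : R :=
  match meander_from 0 w with Some h => u ^ h | None => 0 end.

Definition wterm (P : list step -> bool) (u : R) (w : list step) : R :=
  if P w then INR (weight w) * hpow u w else 0.

Definition wpoly (P : list step -> bool) (n : nat) (u : R) : R :=
  lsum (words n) (wterm P u).

Definition has_nU2 (j : nat) (w : list step) : bool := (nU2 w =? j)%nat.

(* [Qpoly j n u] is the coefficient of [z ^ n] in the generating function
   Q_j(z,u) of all meanders with [j] steps U2, and [Fpoly j n u] that of
   z ^ n in F_j(z,u). *)
Definition Qpoly (j n : nat) (u : R) : R := wpoly (has_nU2 j) n u.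

Definition Fpoly (j n : nat) (u : R) : R :=
  match j with
  | O => match n with O => 1 | S _ => 0 end
  | S _ => wpoly (fun w => has_nU2 j w && last_is_U2 w) n u
  end.

Lemma wterm_snoc_U1 j u w :
  wterm (has_nU2 j) u (w ++ [U1]) = u * wterm (has_nU2 j) u w.
Proof.
  unfold wterm, has_nU2, hpow. rewrite nU2_snoc, weight_snoc, meander_from_app.
  rewrite Nat.add_0_r, Nat.mul_1_r.
  destruct (nU2 w =? j)%nat, (meander_from 0 w); simpl; ring.
Qed.

Lemma wterm_snoc_Dn j u w :
  u * wterm (has_nU2 j) u (w ++ [Dn]) = wterm (has_nU2 j) u w - wterm (has_nU2 j) 0 w.
Proof.
  unfold wterm, has_nU2, hpow. rewrite nU2_snoc, weight_snoc, meander_from_app.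
  rewrite Nat.add_0_r, Nat.mul_1_r.
  destruct (nU2 w =? j)%nat, (meander_from 0 w) as [[|h]|]; simpl; ring.
Qed.

Lemma wterm_snoc_U2 j u w :
  wterm (has_nU2 (S j)) u (w ++ [U2]) = INR (length w + S j) * (u * wterm (has_nU2 j) u w).
Proof.
  unfold wterm, has_nU2, hpow. rewrite nU2_snoc, weight_snoc, meander_from_app.
  replace (nU2 w + 1 =? S j)%nat with (nU2 w =? j)%nat
    by (rewrite Nat.add_1_r; reflexivity).
  destruct (Nat.eqb_spec (nU2 w) j) as [->|_]; [|ring].
  rewrite mult_INR, (Nat.add_comm 1), <- Nat.add_assoc.
  destruct (meander_from 0 w); simpl; ring.
Qed.

Lemma wterm_snoc_U2_0 u w : wterm (has_nU2 0) u (w ++ [U2]) = 0.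
Proof. unfold wterm, has_nU2. rewrite nU2_snoc, Nat.add_1_r. reflexivity. Qed.

Lemma Fpoly_snoc_U2 j n u :
  Fpoly j (S n) u = lsum (words n) (fun w => wterm (has_nU2 j) u (w ++ [U2])).
Proof.
  destruct j as [|j].
  - simpl Fpoly. rewrite <- (lsum_const_0 (words n)).
    apply lsum_ext. intro w. symmetry; apply wterm_snoc_U2_0.
  - unfold Fpoly, wpoly. rewrite lsum_words_snoc. apply lsum_ext. intro w.
    unfold wterm. rewrite !last_is_U2_snoc, !andb_false_r, andb_true_r. ring.
Qed.

Lemma Fpoly_S_0 j u : Fpoly (S j) 0 u = 0.
Proof. unfold Fpoly, wpoly, wterm, last_is_U2. simpl. rewrite ?andb_false_r. ring. Qed.

Lemma Fpoly_S_S j n u : Fpoly (S j) (S n) u = INR (n + S j) * (u * Qpoly j n u).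
Proof.
  rewrite Fpoly_snoc_U2. unfold Qpoly, wpoly. rewrite <- !lsum_scal.
  apply lsum_ext_in. intros w Hw.
  rewrite wterm_snoc_U2, (words_length n w Hw). reflexivity.
Qed.

Lemma Qpoly_0 j u : Qpoly j 0 u = Fpoly j 0 u.
Proof.
  destruct j as [|j]; [| rewrite Fpoly_S_0]; unfold Qpoly, wpoly, wterm, hpow, weight; simpl; ring.
Qed.

Lemma Qpoly_S j n u :
  u * Qpoly j (S n) u = u * Fpoly j (S n) u + u ^ 2 * Qpoly j n u + (Qpoly j n u - Qpoly j n 0).
Proof.
  rewrite Fpoly_snoc_U2. unfold Qpoly, wpoly. rewrite lsum_words_snoc.
  rewrite <- !lsum_scal, <- lsum_minus, <- !lsum_plus.
  apply lsum_ext. intro w.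
  rewrite wterm_snoc_U1, <- wterm_snoc_Dn. ring.
Qed.

Lemma sum_f_R0_indicator h x n :
  sum_f_R0 (fun l => if (h =? l)%nat then x else 0) n = if (h <=? n)%nat then x else 0.
Proof.
  induction n as [|n IH]; [destruct h; reflexivity|].
  rewrite tech5, IH.
  destruct (Nat.leb_spec h n), (Nat.eqb_spec h (S n)), (Nat.leb_spec h (S n));
    try lia; ring.
Qed.

Lemma sum_f_R0_height (c : list step -> bool) w u :
  sum_f_R0 (fun l => INR (if ends_at w l && c w then weight w else 0%nat) * u ^ l) (length w)
  = wterm c u w.
Proof.
  unfold ends_at, wterm, hpow. destruct (meander_from 0 w) as [h|] eqn:Hw.
  - destruct (c w).
    + rewrite (sum_eq _ (fun l => if (h =? l)%nat then INR (weight w) * u ^ h else 0)).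
      * rewrite sum_f_R0_indicator.
        apply meander_from_le, Nat.leb_le in Hw. simpl in Hw. rewrite Hw. reflexivity.
      * intros l _. rewrite andb_true_r. destruct (Nat.eqb_spec h l) as [->|]; simpl; ring.
    + rewrite (sum_eq _ (fun _ => 0)), sum_cte by (intros; rewrite andb_false_r; apply Rmult_0_l).
      ring.
  - rewrite (sum_eq _ (fun _ => 0)), sum_cte by (intros; apply Rmult_0_l).
    destruct (c w); ring.
Qed.

Lemma sum_f_R0_heights (c : list step -> bool) n u :
  sum_f_R0 (fun l =>
    INR (list_sum (map (fun w => if ends_at w l && c w then weight w else 0%nat) (words n)))
    * u ^ l) n
  = wpoly c n u.
Proof.
  rewrite (sum_eq _ (fun l => lsum (words n)
             (fun w => INR (if ends_at w l && c w then weight w else 0%nat) * u ^ l))).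
  - rewrite sum_f_R0_lsum. apply lsum_ext_in. intros w Hw.
    rewrite <- (words_length n w Hw). apply sum_f_R0_height.
  - intros l _. rewrite INR_list_sum_map, Rmult_comm, <- lsum_scal.
    apply lsum_ext. intro w. ring.
Qed.

Lemma fcoef_sum j n u :
  sum_f_R0 (fun l => INR (fcoef (S j) n l) * u ^ l) n = Fpoly (S j) n u.
Proof.
  unfold fcoef, Fpoly. rewrite <- sum_f_R0_heights. apply sum_eq. intros l _.
  do 3 f_equal. apply map_ext. intro w. rewrite andb_assoc. reflexivity.
Qed.

Lemma bcoef_Qpoly k n : INR (bcoef k n) = Qpoly k n 0.
Proof.
  unfold bcoef, Qpoly, wpoly. rewrite INR_list_sum_map. apply lsum_ext. intro w.
  unfold wterm, has_nU2, ends_at, hpow.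
  destruct (meander_from 0 w) as [[|h]|], (nU2 w =? k)%nat; simpl; ring.
Qed.

Lemma hpow_abs_le u w : Rabs u <= 1 -> Rabs (hpow u w) <= 1.
Proof.
  intro Hu. unfold hpow. destruct (meander_from 0 w) as [h|].
  - rewrite <- RPow_abs, <- (pow1 h). apply pow_incr. split; [apply Rabs_pos | exact Hu].
  - rewrite Rabs_R0; lra.
Qed.

Lemma weight_le w : INR (weight w) <= (2 * INR (length w) + 1) ^ nU2 w.
Proof.
  replace (2 * INR (length w) + 1) with (INR (1 + 0 + 2 * length w))
    by (rewrite !plus_INR, mult_INR; simpl; ring).
  rewrite <- pow_INR. apply le_INR, wt_le.
Qed.

Definition coef_bound (j n : nat) : R := 3 ^ n * (2 * INR n + 1) ^ j.

Lemma coef_bound_pos j n : 0 < coef_bound j n.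
Proof. unfold coef_bound. pose proof (pos_INR n). apply Rmult_lt_0_compat; apply pow_lt; lra. Qed.

Lemma wpoly_abs_le P j n u :
  (forall w, P w = true -> nU2 w = j) -> Rabs u <= 1 -> Rabs (wpoly P n u) <= coef_bound j n.
Proof.
  intros HP Hu. unfold wpoly, coef_bound. apply lsum_words_abs_le. intros w <-.
  unfold wterm. destruct (P w) eqn:Hw.
  - rewrite Rabs_mult, Rabs_right by (apply Rle_ge, pos_INR).
    rewrite <- (Rmult_1_r (_ ^ j)), <- (HP w Hw).
    apply Rmult_le_compat; [apply pos_INR | apply Rabs_pos | apply weight_le | now apply hpow_abs_le].
  - rewrite Rabs_R0. apply pow_le. pose proof (pos_INR (length w)). lra.
Qed.

Lemma Qpoly_abs_le j n u : Rabs u <= 1 -> Rabs (Qpoly j n u) <= coef_bound j n.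
Proof. apply wpoly_abs_le. intros w Hw. now apply Nat.eqb_eq. Qed.

Lemma Fpoly_abs_le j n u : Rabs u <= 1 -> Rabs (Fpoly j n u) <= coef_bound j n.
Proof.
  intro Hu. destruct j as [|j].
  - unfold coef_bound. rewrite Rmult_1_r.
    assert (1 <= 3 ^ n) by (rewrite <- (pow1 n); apply pow_incr; lra).
    destruct n; simpl Fpoly; rewrite ?Rabs_R1, ?Rabs_R0; lra.
  - apply wpoly_abs_le; [| exact Hu]. intros w Hw.
    apply andb_prop in Hw as [Hw _]. now apply Nat.eqb_eq.
Qed.

Lemma is_lim_seq_odd_ratio : is_lim_seq (fun n => (2 * INR (S n) + 1) / (2 * INR n + 1)) 1.
Proof.
  apply is_lim_seq_le_le with (u := fun _ => 1) (w := fun n => 1 + 2 * / (INR n + 1)).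
  - intro n. pose proof (pos_INR n). rewrite S_INR. split.
    + apply Rcomplements.Rle_div_r; lra.
    + replace ((2 * (INR n + 1) + 1) / (2 * INR n + 1)) with (1 + 2 / (2 * INR n + 1))
        by (field; lra).
      apply Rplus_le_compat_l, Rmult_le_compat_l; [lra|].
      apply Rinv_le_contravar; lra.
  - apply is_lim_seq_const.
  - replace (Finite 1) with (Finite (1 + 2 * 0)) by (f_equal; ring).
    apply is_lim_seq_plus'; [apply is_lim_seq_const |].
    apply is_lim_seq_mult'; [apply is_lim_seq_const |].
    replace (Finite 0) with (Rbar_inv p_infty) by reflexivity.
    apply is_lim_seq_inv; [| discriminate].
    apply (is_lim_seq_ext (fun n => INR (S n))); [intro; apply S_INR |].
    apply (is_lim_seq_incr_1 INR), is_lim_seq_INR.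
Qed.

Lemma CV_radius_coef_bound j : CV_radius (coef_bound j) = / 3.
Proof.
  apply CV_radius_finite_DAlembert; [intro n; pose proof (coef_bound_pos j n); lra | lra |].
  apply is_lim_seq_ext with (u := fun n => 3 * ((2 * INR (S n) + 1) / (2 * INR n + 1)) ^ j).
  - intro n. pose proof (coef_bound_pos j n). pose proof (coef_bound_pos j (S n)).
    rewrite Rabs_right by (apply Rle_ge, Rlt_le, Rdiv_lt_0_compat; assumption).
    unfold coef_bound. pose proof (pos_INR n).
    unfold Rdiv. rewrite Rpow_mult_distr, pow_inv. simpl (3 ^ S n).
    field. split; apply pow_nonzero; lra.
  - replace (Finite 3) with (Finite (3 * 1)) by (f_equal; ring).
    apply is_lim_seq_mult'; [apply is_lim_seq_const |].
    induction j as [|j IH]; [apply is_lim_seq_const |].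
    replace (Finite 1) with (Finite (1 * 1)) by (f_equal; ring).
    apply is_lim_seq_mult'; [apply is_lim_seq_odd_ratio | exact IH].
Qed.

Lemma CV_radius_le_abs (a c : nat -> R) :
  (forall n, Rabs (a n) <= Rabs (c n)) -> Rbar_le (CV_radius c) (CV_radius a).
Proof.
  intro H. destruct (CV_radius_bounded c) as [_ Hc]. apply Hc.
  intros r [M HM]. destruct (CV_radius_bounded a) as [Ha _]. apply Ha.
  exists M. intro n. eapply Rle_trans; [| apply (HM n)]. rewrite !Rabs_mult.
  apply Rmult_le_compat_r; [apply Rabs_pos | apply H].
Qed.

Lemma CV_radius_ge_of_coef_bound j (a : nat -> R) :
  (forall n, Rabs (a n) <= coef_bound j n) -> Rbar_le (/ 3) (CV_radius a).
Proof.
  intro H. rewrite <- (CV_radius_coef_bound j). apply CV_radius_le_abs.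
  intro n. rewrite (Rabs_right (coef_bound j n)); [apply H | left; apply coef_bound_pos].
Qed.

Lemma ex_series_of_coef_bound j (a : nat -> R) x :
  (forall n, Rabs (a n) <= coef_bound j n) -> Rabs x < / 3 -> ex_series (fun n => x ^ n * a n).
Proof.
  intros H Hx.
  assert (Hr : Rbar_lt (Rabs x) (CV_radius a))
    by (eapply (Rbar_lt_le_trans _ (Finite (/ 3))); [exact Hx | exact (CV_radius_ge_of_coef_bound j a H)]).
  apply CV_disk_inside, ex_series_Rabs in Hr.
  eapply ex_series_ext; [| exact Hr]. intro n. apply Rmult_comm.
Qed.

Definition Fser (j : nat) (z u : R) : R := Series (fun n => z ^ n * Fpoly j n u).
Definition Qser (j : nat) (z u : R) : R := Series (fun n => z ^ n * Qpoly j n u).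

Lemma ex_series_Fser j z u :
  Rabs z < / 3 -> Rabs u <= 1 -> ex_series (fun n => z ^ n * Fpoly j n u).
Proof. intros Hz Hu. apply (ex_series_of_coef_bound j); auto. intro; now apply Fpoly_abs_le. Qed.

Lemma ex_series_Qser j z u :
  Rabs z < / 3 -> Rabs u <= 1 -> ex_series (fun n => z ^ n * Qpoly j n u).
Proof. intros Hz Hu. apply (ex_series_of_coef_bound j); auto. intro; now apply Qpoly_abs_le. Qed.

Lemma Fgf_Fser j z u : Rabs z < / 3 -> Rabs u <= 1 -> Fgf j z u = Fser j z u.
Proof.
  intros Hz Hu. unfold Fser. destruct j as [|j].
  - rewrite Series_incr_1 by now apply ex_series_Fser.
    rewrite (Series_ext _ (fun _ => 0 * 1)), Series_scal_l by (intro; simpl; ring).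
    simpl. ring.
  - apply Series_ext. intro n. now rewrite fcoef_sum.
Qed.

Lemma Qpoly_shift j u n :
  u * Qpoly j n u - u * Fpoly j n u
  = PS_incr_1 (fun m => u ^ 2 * Qpoly j m u + (Qpoly j m u - Qpoly j m 0)) n.
Proof.
  destruct n as [|n].
  - change (PS_incr_1 _ 0) with 0. rewrite Qpoly_0. ring.
  - simpl PS_incr_1. rewrite Qpoly_S. ring.
Qed.

Lemma Qser_kernel j z u : Rabs z < / 3 -> Rabs u <= 1 ->
  (u - z * u ^ 2 - z) * Qser j z u = u * Fser j z u - z * Qser j z 0.
Proof.
  intros Hz Hu.
  assert (HQ := ex_series_Qser j z u Hz Hu).
  assert (HQ0 : ex_series (fun n => z ^ n * Qpoly j n 0))
    by (apply ex_series_Qser; [exact Hz | rewrite Rabs_R0; lra]).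
  assert (HF := ex_series_Fser j z u Hz Hu).
  assert (Hrec : u * Qser j z u - u * Fser j z u
                 = z * (u ^ 2 * Qser j z u + (Qser j z u - Qser j z 0))).
  { assert (HuQ : ex_series (fun n => u * (z ^ n * Qpoly j n u)))
      by exact (ex_series_scal_l u _ HQ).
    assert (HuF : ex_series (fun n => u * (z ^ n * Fpoly j n u)))
      by exact (ex_series_scal_l u _ HF).
    unfold Qser, Fser.
    rewrite <- !Series_scal_l, <- Series_minus by assumption.
    rewrite (Series_ext _ (fun n => z ^ n * PS_incr_1
               (fun m => u ^ 2 * Qpoly j m u + (Qpoly j m u - Qpoly j m 0)) n))
      by (intro n; rewrite <- Qpoly_shift; ring).
    transitivity (z * PSeries (fun m => u ^ 2 * Qpoly j m u + (Qpoly j m u - Qpoly j m 0)) z).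
    { rewrite <- PSeries_incr_1. unfold PSeries. apply Series_ext. intro n. apply Rmult_comm. }
    f_equal. unfold PSeries.
    rewrite (Series_ext _ (fun n => u ^ 2 * (z ^ n * Qpoly j n u)
                                    + (z ^ n * Qpoly j n u - z ^ n * Qpoly j n 0)))
      by (intro; ring).
    assert (Hu2Q : ex_series (fun n => u ^ 2 * (z ^ n * Qpoly j n u)))
      by exact (ex_series_scal_l (u ^ 2) _ HQ).
    assert (HQQ0 : ex_series (fun n => z ^ n * Qpoly j n u - z ^ n * Qpoly j n 0))
      by exact (ex_series_minus _ _ HQ HQ0).
    now rewrite Series_plus, Series_minus, Series_scal_l. }
  lra.
Qed.

Section KernelRoot.

Variable t : R.
Hypothesis t_neq0 : t <> 0.
Hypothesis t_small : 4 * t ^ 2 <= 1.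

Lemma Efun_rationalized : Efun t = 2 * t / (1 + sqrt (1 - 4 * t ^ 2)).
Proof.
  pose proof (sqrt_pos (1 - 4 * t ^ 2)).
  pose proof (sqrt_sqrt (1 - 4 * t ^ 2)).
  unfold Efun. field_simplify_eq; [nra | lra].
Qed.

Lemma Efun_kernel_root : t * Efun t ^ 2 - Efun t + t = 0.
Proof.
  pose proof (sqrt_pos (1 - 4 * t ^ 2)).
  pose proof (sqrt_sqrt (1 - 4 * t ^ 2)).
  rewrite Efun_rationalized. field_simplify_eq; [nra | lra].
Qed.

Lemma Efun_abs_le : Rabs (Efun t) <= 2 * Rabs t.
Proof.
  pose proof (sqrt_pos (1 - 4 * t ^ 2)).
  rewrite Efun_rationalized. unfold Rdiv.
  rewrite Rabs_mult, Rabs_mult, Rabs_inv, (Rabs_right 2), (Rabs_right (1 + _)) by lra.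
  rewrite <- (Rmult_1_r (2 * Rabs t)) at 2.
  apply Rmult_le_compat_l; [pose proof (Rabs_pos t); lra |].
  apply (Rle_trans _ (/ 1)); [apply Rinv_le_contravar | rewrite Rinv_1]; lra.
Qed.

Lemma Efun_neq0 : Efun t <> 0.
Proof.
  pose proof (sqrt_pos (1 - 4 * t ^ 2)).
  rewrite Efun_rationalized. unfold Rdiv.
  apply Rmult_integral_contrapositive_currified.
  - intro H2t. apply t_neq0. lra.
  - apply Rinv_neq_0_compat. lra.
Qed.

Lemma Dfun_Efun : Dfun t = Efun t / t.
Proof. unfold Dfun, Efun. field. auto. Qed.

End KernelRoot.

Lemma neq0_of_Rabs_pos t : 0 < Rabs t -> t <> 0.
Proof. intros Ht ->. rewrite Rabs_R0 in Ht. lra. Qed.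

Lemma sqr_le_of_Rabs_le t : Rabs t <= / 2 -> 4 * t ^ 2 <= 1.
Proof. intro Ht. rewrite <- pow2_abs. pose proof (Rabs_pos t). nra. Qed.

Section SmallDisk.

Variable t : R.
Hypothesis t_in_disk : 0 < Rabs t < / 6.

Let t_neq0 : t <> 0 := neq0_of_Rabs_pos t (proj1 t_in_disk).
Let t_small : 4 * t ^ 2 <= 1 := sqr_le_of_Rabs_le t ltac:(lra).

Lemma Efun_abs_le_1 : Rabs (Efun t) <= 1.
Proof. pose proof (Efun_abs_le t t_neq0 t_small). lra. Qed.

Lemma Qser_at_0 j : t * Qser j t 0 = Efun t * Fser j t (Efun t).
Proof.
  pose proof (Qser_kernel j t (Efun t) ltac:(lra) Efun_abs_le_1) as Hker.
  replace (Efun t - t * Efun t ^ 2 - t) with 0 in Hker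
    by (pose proof (Efun_kernel_root t t_neq0 t_small); lra).
  lra.
Qed.

Lemma kernel_bracket j u : Rabs u <= 1 -> u <> Efun t ->
  t ^ j * ((u * Fser j t u - Efun t * Fser j t (Efun t)) / (u - Efun t)) * Mup t u
  = t ^ S j * (u * Qser j t u).
Proof.
  intros Hu HuE.
  pose proof (Efun_kernel_root t t_neq0 t_small) as Hroot.
  pose proof (Efun_abs_le t t_neq0 t_small) as HE.
  pose proof (Efun_neq0 t t_neq0 t_small) as HE0.
  pose proof (Qser_kernel j t u ltac:(lra) Hu) as Hker.
  rewrite <- Qser_at_0, <- Hker.
  assert (HuE1 : 1 - u * Efun t <> 0).
  { intro Hc. assert (Hle : Rabs (u * Efun t) <= 1 * (2 * Rabs t)).
    { rewrite Rabs_mult. apply Rmult_le_compat; auto; apply Rabs_pos. }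
    replace (u * Efun t) with 1 in Hle by lra. rewrite Rabs_R1 in Hle. lra. }
  replace (u - t * u ^ 2 - t) with (t * (u - Efun t) * (1 - u * Efun t) / Efun t)
    by (field_simplify_eq; [nra | exact HE0]).
  unfold Mup. simpl. field. repeat split; auto. intro. apply HuE. lra.
Qed.

End SmallDisk.

Lemma CV_radius_incr_n (a : nat -> R) n : CV_radius (PS_incr_n a n) = CV_radius a.
Proof. induction n as [|n IH]; [reflexivity | simpl; now rewrite CV_radius_incr_1]. Qed.

Lemma PS_derive_incr_n (b : nat -> R) j n :
  PS_derive (PS_incr_n b (S j)) n = PS_incr_n (fun m => INR (m + S j) * b m) j n.
Proof.
  unfold PS_derive. rewrite !PS_incr_n_simplify.
  destruct (le_lt_dec (S j) (S n)), (le_lt_dec j n); try lia.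
  - replace (S n - S j)%nat with (n - j)%nat by lia.
    replace (n - j + S j)%nat with (S n) by lia. reflexivity.
  - apply Rmult_0_r.
Qed.

Lemma Fser_S_Derive j z u : z <> 0 -> Rabs z < / 3 -> Rabs u <= 1 ->
  Fser (S j) z u = z / z ^ j * Derive (fun t => t ^ S j * (u * Qser j t u)) z.
Proof.
  intros Hz0 Hz Hu.
  set (b := fun n => u * Qpoly j n u).
  assert (Hb : forall n, Rabs (b n) <= coef_bound j n).
  { intro n. unfold b. rewrite Rabs_mult, <- (Rmult_1_l (coef_bound j n)).
    apply Rmult_le_compat; auto using Rabs_pos, Qpoly_abs_le. }
  rewrite (Derive_ext _ (PSeries (PS_incr_n b (S j)))).
  2:{ intro t. rewrite PSeries_incr_n. f_equal. unfold Qser, PSeries, b.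
      rewrite <- Series_scal_l. apply Series_ext. intro. ring. }
  rewrite Derive_PSeries, (PSeries_ext _ _ _ (PS_derive_incr_n b j)), PSeries_incr_n.
  2:{ rewrite CV_radius_incr_n.
      eapply (Rbar_lt_le_trans _ (Finite (/ 3))); [exact Hz | exact (CV_radius_ge_of_coef_bound j b Hb)]. }
  replace (z / z ^ j * (z ^ j * _)) with (z * PSeries (fun m => INR (m + S j) * b m) z)
    by (field; now apply pow_nonzero).
  unfold Fser. rewrite Series_incr_1 by now apply ex_series_Fser.
  rewrite Fpoly_S_0, Rmult_0_r, Rplus_0_l.
  unfold PSeries. rewrite <- Series_scal_l. apply Series_ext. intro n.
  rewrite Fpoly_S_S. unfold b. simpl pow. ring.
Qed.

Lemma locally_continuous_between (f : R -> R) z a b :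
  continuous f z -> a < f z < b -> locally z (fun t => a < f t < b).
Proof.
  intros Hf Hab. apply (Hf (fun y => a < y < b)).
  apply (locally_interval _ _ (Finite a) (Finite b)); simpl; tauto.
Qed.

Lemma locally_continuous_neq (f : R -> R) z u :
  continuous f z -> u <> f z -> locally z (fun t => u <> f t).
Proof.
  intros Hf Hu. destruct (Rlt_or_le u (f z)).
  - apply (filter_imp (fun t => u < f t < f z + 1)); [intros t Ht; lra |].
    apply locally_continuous_between; [exact Hf | lra].
  - apply (filter_imp (fun t => f z - 1 < f t < u)); [intros t Ht; lra |].
    apply locally_continuous_between; [exact Hf | lra].
Qed.

Lemma continuous_Efun z : z <> 0 -> 4 * z ^ 2 < 1 -> continuous Efun z.
Proof.
  intros Hz0 Hz. apply (@ex_derive_continuous R_AbsRing R_NormedModule).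
  unfold Efun. auto_derive. repeat split; auto; lra.
Qed.

Lemma Fgf_S_Derive j z u : 0 < Rabs z < / 6 -> Rabs u < / 6 -> u <> Efun z ->
  Fgf (S j) z u =
  z / z ^ j * Derive (fun t => t ^ j *
                        ((u * Fgf j t u - Efun t * Fgf j t (Efun t)) / (u - Efun t)) * Mup t u) z.
Proof.
  intros Hz Hu HuE.
  assert (Hz0 := neq0_of_Rabs_pos z (proj1 Hz)).
  rewrite Fgf_Fser by lra.
  rewrite (Derive_ext_loc _ (fun t => t ^ S j * (u * Qser j t u))).
  - apply Fser_S_Derive; lra.
  - assert (Hnear : locally z (fun t => 0 < Rabs t < / 6 /\ u <> Efun t)).
    { apply filter_and.
      - apply (locally_continuous_between Rabs); [apply continuous_Rabs | exact Hz].
      - apply locally_continuous_neq; [| exact HuE].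
        apply continuous_Efun; [exact Hz0 |].
        rewrite <- pow2_abs. pose proof (Rabs_pos z). nra. }
    revert Hnear. apply filter_imp. intros t [Ht HtE].
    pose proof (Efun_abs_le_1 t Ht).
    rewrite !Fgf_Fser by lra. apply kernel_bracket; auto; lra.
Qed.

Lemma Bgf_Fgf_Efun k z : 0 < Rabs z < / 6 -> Bgf k z = Fgf k z (Efun z) * Dfun z.
Proof.
  intro Hz. assert (Hz0 := neq0_of_Rabs_pos z (proj1 Hz)).
  rewrite Fgf_Fser by (pose proof (Efun_abs_le_1 z Hz); lra).
  rewrite Dfun_Efun by exact Hz0.
  replace (Bgf k z) with (Qser k z 0).
  - replace (Qser k z 0) with (z * Qser k z 0 / z) by (field; exact Hz0).
    rewrite Qser_at_0 by exact Hz. field. exact Hz0.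
  - unfold Bgf, Qser. apply Series_ext. intro n. rewrite bcoef_Qpoly. apply Rmult_comm.
Qed.

Theorem theorem13 :
  (forall k : nat, (1 <= k)%nat ->
    exists r : R, 0 < r /\
      forall z u : R, 0 < Rabs z < r -> Rabs u < r -> u <> Efun z ->
        Fgf k z u =
          z / z ^ (k - 1) *
          Derive (fun t => t ^ (k - 1) *
                   ((u * Fgf (k - 1) t u - Efun t * Fgf (k - 1) t (Efun t))
                      / (u - Efun t)) * Mup t u) z)
  /\
  (forall k : nat,
    exists r : R, 0 < r /\
      forall z : R, 0 < Rabs z < r ->
        Bgf k z = Fgf k z (Efun z) * Dfun z).
Proof.
  split.
  - intros [|j] Hk; [lia |]. exists (/ 6). split; [lra |].
    replace (S j - 1)%nat with j by lia. apply Fgf_S_Derive.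
  - intro k. exists (/ 6). split; [lra |]. apply Bgf_Fgf_Efun.
Qed.
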